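(* Let $R$ be a ring, $n$ a positive integer, and $I$ a proper ideal of $R$. Then the following are equivalent: (1) $I$ is strongly weakly $n$-absorbing; (2) for any ideals $I_1,\dots,I_{n+1}$ of $R$ with $I\subseteq I_1$, if $0\neq I_1\cdots I_{n+1}\subseteq I$ then there are $n$ of the $I_i$'s whose product is contained in $I$.
   Context: All rings are commutative with $1\neq0$. A proper ideal $I$ of $R$ is strongly weakly $n$-absorbing if whenever $0\neq I_1\cdots I_{n+1}\subseteq I$ for ideals $I_1,\dots,I_{n+1}$ of $R$, there are $n$ of the $I_i$'s whose product is contained in $I$. *)

From mathcomp Require Import all_boot all_algebra.
Set Implicit Arguments. Unset Strict Implicit. Unset Printing Implicit Defensive.
Import GRing.Theory.
Local Open Scope ring_scope.

Section IdealDefs.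
Context {R : comNzRingType}.

Definition sw_is_ideal (I : R -> Prop) : Prop :=
  [/\ I 0, (forall x y, I x -> I y -> I (x + y)), (forall x, I x -> I (- x))
    & (forall r x, I x -> I (r * x))].

Definition sw_proper_ideal (I : R -> Prop) : Prop := sw_is_ideal I /\ ~ I 1.

Definition sw_subset (I J : R -> Prop) : Prop := forall x, I x -> J x.

(* Product of the ideals F i for i in S: the ideal generated by all products
   \prod_(i in S) a_i with a_i in F i (i.e. all finite sums of such products). *)
Definition sw_prod_ideal (k : nat) (F : 'I_k -> R -> Prop) (S : {set 'I_k}) : R -> Prop :=
  fun x => forall J : R -> Prop, sw_is_ideal J ->
    (forall a : 'I_k -> R, (forall i, i \in S -> F i (a i)) -> J (\prod_(i in S) a i)) ->
    J x.

Definition strongly_weakly_n_absorbing (n : nat) (I : R -> Prop) : Prop :=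
  sw_proper_ideal I /\
  forall F : 'I_n.+1 -> R -> Prop, (forall i, sw_is_ideal (F i)) ->
    (exists x, sw_prod_ideal F setT x /\ x <> 0) ->
    sw_subset (sw_prod_ideal F setT) I ->
    exists j : 'I_n.+1, sw_subset (sw_prod_ideal F [set~ j]) I.

End IdealDefs.

(* To go from (2) to (1), enlarge the first factor F_0 to F_0 + I. Since
   (F_0 + I) F_1 ... F_n is contained in F_0 F_1 ... F_n + I, the hypotheses
   of (2) still hold for the enlarged family, which now contains I in its first
   factor; the n-fold products it yields contain those of the original family. *)
From mathcomp Require Import all_boot all_algebra.
Import GRing.Theory.
Local Open Scope ring_scope.

Section ProductIdeal.
Context {R : comNzRingType} {k : nat}.
Implicit Types (F G : 'I_k -> R -> Prop) (S : {set 'I_k}) (I J : R -> Prop).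

Lemma sw_prod_ideal_gen F S (a : 'I_k -> R) :
  (forall i, i \in S -> F i (a i)) -> sw_prod_ideal F S (\prod_(i in S) a i).
Proof. by move=> Fa J _; apply. Qed.

Lemma sw_prod_ideal_min F S J : sw_is_ideal J ->
  (forall a : 'I_k -> R, (forall i, i \in S -> F i (a i)) -> J (\prod_(i in S) a i)) ->
  sw_subset (sw_prod_ideal F S) J.
Proof. by move=> idJ genJ x; apply. Qed.

Lemma sw_prod_ideal_mono F G S :
  (forall i, i \in S -> sw_subset (F i) (G i)) ->
  sw_subset (sw_prod_ideal F S) (sw_prod_ideal G S).
Proof.
move=> FG x Fx J idJ genJ; apply: Fx => // a Fa; apply: genJ => i iS.
exact: FG (Fa i iS).
Qed.

Definition sw_sum_ideal I J : R -> Prop :=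
  fun x => exists a b, [/\ I a, J b & x = a + b].

Lemma sw_sum_ideal_is_ideal I J :
  sw_is_ideal I -> sw_is_ideal J -> sw_is_ideal (sw_sum_ideal I J).
Proof.
move=> [I0 ID IN IM] [J0 JD JN JM]; split.
- by exists 0, 0; rewrite addr0.
- move=> _ _ [a [b [Ia Jb ->]]] [c [d [Ic Jd ->]]].
  by exists (a + c), (b + d); rewrite addrACA; split; [apply: ID|apply: JD|].
- move=> _ [a [b [Ia Jb ->]]].
  by exists (- a), (- b); rewrite opprD; split; [apply: IN|apply: JN|].
- move=> r _ [a [b [Ia Jb ->]]].
  by exists (r * a), (r * b); rewrite mulrDr; split; [apply: IM|apply: JM|].
Qed.

Lemma sw_sum_ideal_subl I J : sw_is_ideal J -> sw_subset I (sw_sum_ideal I J).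
Proof. by move=> [J0 _ _ _] x Ix; exists x, 0; rewrite addr0. Qed.

Lemma sw_sum_ideal_subr I J : sw_is_ideal I -> sw_subset J (sw_sum_ideal I J).
Proof. by move=> [I0 _ _ _] x Jx; exists 0, x; rewrite add0r. Qed.

Definition sw_add_at F (j : 'I_k) I : 'I_k -> R -> Prop :=
  fun i => if i == j then sw_sum_ideal (F i) I else F i.

Lemma sw_add_at_is_ideal F j I :
  (forall i, sw_is_ideal (F i)) -> sw_is_ideal I ->
  forall i, sw_is_ideal (sw_add_at F j I i).
Proof.
by move=> idF idI i; rewrite /sw_add_at; case: eqP => // _; apply: sw_sum_ideal_is_ideal.
Qed.

Lemma sw_add_at_sub F j I : sw_is_ideal I -> forall i, sw_subset (F i) (sw_add_at F j I i).
Proof.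
move=> idI i; rewrite /sw_add_at; case: eqP => _; last by [].
exact: sw_sum_ideal_subl.
Qed.

Lemma sw_add_at_prod_sub F j S I : j \in S -> sw_is_ideal I ->
  sw_subset (sw_prod_ideal F S) I -> sw_subset (sw_prod_ideal (sw_add_at F j I) S) I.
Proof.
move=> jS idI FSI; have [_ ID _ IM] := idI.
apply: sw_prod_ideal_min => // a Fa.
rewrite (bigD1 j) //=.
have := Fa j jS; rewrite /sw_add_at eqxx => -[f [b [Ff Ib ->]]].
rewrite mulrDl; apply: ID; last by rewrite mulrC; apply: IM.
pose a' i := if i == j then f else a i.
have -> : f * \prod_(i in S | i != j) a i = \prod_(i in S) a' i.
  rewrite [RHS](bigD1 j) //= /a' eqxx; congr (_ * _).
  by apply: eq_bigr => i /andP[_ /negbTE ->].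
apply: FSI; apply: sw_prod_ideal_gen => i iS; rewrite /a'.
by case: eqP => [-> //|/eqP ne]; have := Fa i iS; rewrite /sw_add_at (negbTE ne).
Qed.

End ProductIdeal.

Theorem mainTheorem12 (R : comNzRingType) (n : nat) (hn : (0 < n)%N)
  (I : R -> Prop) (hI : sw_proper_ideal I) :
  strongly_weakly_n_absorbing n I <->
  (forall F : 'I_n.+1 -> R -> Prop, (forall i, sw_is_ideal (F i)) ->
     sw_subset I (F ord0) ->
     (exists x, sw_prod_ideal F setT x /\ x <> 0) ->
     sw_subset (sw_prod_ideal F setT) I ->
     exists j : 'I_n.+1, sw_subset (sw_prod_ideal F [set~ j]) I).
Proof.
have [idI _] := hI.
split; first by move=> [_ absI] F idF _; apply: absI.
move=> absI; split => // F idF [x [Fx x_neq0]] FI.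
have F_sub_add := sw_add_at_sub F ord0 I idI.
have [j addj] : exists j, sw_subset (sw_prod_ideal (sw_add_at F ord0 I) [set~ j]) I.
  apply: absI.
  - exact: sw_add_at_is_ideal.
  - by rewrite /sw_add_at eqxx; apply: sw_sum_ideal_subr; apply: idF.
  - by exists x; split => //; apply: sw_prod_ideal_mono Fx => i _; apply: F_sub_add.
  - exact: sw_add_at_prod_sub.
exists j => y Fy; apply: addj; apply: sw_prod_ideal_mono Fy => i _; exact: F_sub_add.
Qed.
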